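(* The representation $\rho$ in the following setting is reducible if and only if $w\ne2$. Setting: $q$ a root of unity with $n$ even and $q^4\ne1$ ($N=n/2$); $k\in\mathbb Z$, $w=-q^{4k+2}-q^{-4k-2}$; $V$ has basis $\{u_i:-N\le i\le N-1\}$, $u_N:=0$; $\lambda_i=q^{2i}+q^{-2i}$, and for $i\ne-N,0$: $s_i=\frac{q^{2i-2k}-q^{-2i+2k}}{q^{2i}-q^{-2i}}$, $s'_i=\frac{q^{2i+2}-q^{-2i-2}}{q^{2i}-q^{-2i}}s_i$, $\beta_i=\frac{q^{2k}-q^{-2k}}{(q^{2i}-q^{-2i})^3}$; $\rho$ is the representation of $\mathcal S_q(\Sigma_{1,1})$ with $\rho(\alpha_0)u_i=\lambda_iu_i$ ($-N\le i\le0$), $\rho(\alpha_0)u_i=\lambda_iu_i+u_{-i}$ ($0<i<N$), $\rho(\alpha_\infty)u_{-N}=(q^{2k}+q^{-2k})u_{-N+1}+(q^2-q^{-2})(q^{2k}-q^{-2k})u_{N-1}$, $\rho(\alpha_\infty)u_i=s_iu_{i+1}+s_{-i}u_{i-1}$ ($-N<i<0$), $\rho(\alpha_\infty)u_0=(q^{2k}+q^{-2k})u_{-1}-(q^2-q^{-2})(q^{2k}-q^{-2k})u_1$, $\rho(\alpha_\infty)u_i=\beta_iu_{-i-1}-\beta_iu_{-i+1}+s'_{-i}u_{i-1}+s'_iu_{i+1}$ ($0<i<N$).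
   Context: $\mathcal S_q(\Sigma_{1,1})$ is the Kauffman bracket skein algebra of the one-punctured torus, generated by the slope $0,1,\infty$ curves $\alpha_0,\alpha_1,\alpha_\infty$; for $q^4\ne1$ a representation is determined by the images of $\alpha_0,\alpha_\infty$. For $q$ a root of unity, $n=\mathrm{ord}(q^2)$, $N=\mathrm{ord}(q^4)$. (The formulas above are known to define a representation.) *)

From HB Require Import structures.
From mathcomp Require Import all_boot all_order all_algebra all_field.
Set Implicit Arguments. Unset Strict Implicit. Unset Printing Implicit Defensive.
Import Order.TTheory GRing.Theory Num.Theory.
Local Open Scope ring_scope.

Section Rho.
Variables (q : algC) (k : int) (N : nat).

(* index i : 'I_(2N) corresponds to the integer i - N in [-N, N-1] *)
Definition idx (i : 'I_(N.*2)) : int := (nat_of_ord i)%:Z - N%:Z.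

Definition ind (j t : int) : algC := (j == t)%:R.

Definition lam (i : int) : algC := q ^ (2 * i) + q ^ (- 2 * i).
Definition s_ (i : int) : algC :=
  (q ^ (2 * i - 2 * k) - q ^ (- 2 * i + 2 * k)) / (q ^ (2 * i) - q ^ (- 2 * i)).
Definition s'_ (i : int) : algC :=
  (q ^ (2 * i + 2) - q ^ (- 2 * i - 2)) / (q ^ (2 * i) - q ^ (- 2 * i)) * s_ i.
Definition beta (i : int) : algC :=
  (q ^ (2 * k) - q ^ (- 2 * k)) / (q ^ (2 * i) - q ^ (- 2 * i)) ^+ 3.

(* rho(alpha_0) u_i = sum_j (rhoA0 coefficient i j) u_j *)
Definition a0coef (i j : int) : algC :=
  if (i <= 0) then lam i * ind j i
  else lam i * ind j i + ind j (- i).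

(* rho(alpha_infty) u_i; u_N := 0 is automatic since j ranges over [-N, N-1] *)
Definition ainfcoef (i j : int) : algC :=
  if i == - N%:Z then
    (q ^ (2 * k) + q ^ (- 2 * k)) * ind j (- N%:Z + 1)
    + (q ^+ 2 - q ^- 2) * (q ^ (2 * k) - q ^ (- 2 * k)) * ind j (N%:Z - 1)
  else if i < 0 then s_ i * ind j (i + 1) + s_ (- i) * ind j (i - 1)
  else if i == 0 then
    (q ^ (2 * k) + q ^ (- 2 * k)) * ind j (-1)
    - (q ^+ 2 - q ^- 2) * (q ^ (2 * k) - q ^ (- 2 * k)) * ind j 1
  else beta i * ind j (- i - 1) - beta i * ind j (- i + 1)
       + s'_ (- i) * ind j (i - 1) + s'_ i * ind j (i + 1).

(* Matrices acting on row coordinate vectors: u_i *m M = rho(x) u_i. *)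
Definition rhoA0 : 'M[algC]_(N.*2) := \matrix_(i, j) a0coef (idx i) (idx j).
Definition rhoAinf : 'M[algC]_(N.*2) := \matrix_(i, j) ainfcoef (idx i) (idx j).

End Rho.

Definition wpar (q : algC) (k : int) : algC := - q ^ (4 * k + 2) - q ^ (- 4 * k - 2).

(* A representation of S_q(Sigma_{1,1}) (q^4 <> 1) on algC^m given by the images
   A, B of alpha_0, alpha_infty is reducible iff there is a nontrivial proper
   subspace (row space of U) stable under A and B. *)
Definition reducible2 (m : nat) (A B : 'M[algC]_m) : Prop :=
  exists U : 'M[algC]_m, [/\ stablemx U A, stablemx U B & (0 < \rank U < m)%N].

From HB Require Import structures.
From mathcomp Require Import all_boot all_order all_algebra all_field.
From mathcomp Require Import zify ring.
Set Implicit Arguments. Unset Strict Implicit. Unset Printing Implicit Defensive.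
Import Order.TTheory GRing.Theory Num.Theory.
Local Open Scope ring_scope.

(* Write N = n/2 and [z] := q^(2z) - q^(-2z).  As q^2 is a primitive 2N-th root
   of unity, [z] = 0 exactly when N divides z; hence, with r := k mod N, the
   coefficients s_i and s'_i of rho(alpha_infty) vanish exactly at i = r (mod N),
   and w = 2 exactly when 2r + 1 = N.

   If 2r + 1 <> N these zeros cut the action apart: the span of the u_t with
   r - N <= t <= -r (when N < 2r + 1), resp. with t <= 0 or 1 <= t <= r or
   N - r <= t (when 2r + 1 < N), is invariant.

   If 2r + 1 = N, the eigenvalues lambda_{-N}, ..., lambda_0 of rho(alpha_0) are
   distinct and u_t maps to lambda_t u_t + u_{-t} for t > 0.  So an invariant
   subspace contains some u_t with t <= 0, and rho(alpha_0) separates the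
   components u_s (s <= 0) of the two-term vectors that rho(alpha_infty) produces
   from basis vectors; through its non-zero coefficients, one basis vector of the
   subspace yields all the others. *)

Lemma between_ndvdz (M z a : int) : 0 < M -> a * M < z < (a + 1) * M -> ~~ (M %| z)%Z.
Proof. by move=> M0 hz; apply/negP => /dvdzP [m hm]; move: hz; rewrite hm !ltr_pM2r //; lia. Qed.

Lemma small_dvdz_eq0 (M z : int) : 0 < M -> - M < z < M -> (M %| z)%Z -> z = 0.
Proof.
move=> M0 hz hMz; case: (ltrgtP z 0) => // hz0.
  by move: hMz; rewrite (negbTE (@between_ndvdz M z (-1) M0 _)) //; lia.
by move: hMz; rewrite (negbTE (@between_ndvdz M z 0 M0 _)) //; lia.
Qed.

Lemma dvdz_subr_congr (M a b i : int) : (M %| a - b)%Z -> (M %| i - a)%Z = (M %| i - b)%Z.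
Proof.
move=> hab; apply/idP/idP => h.
  by rewrite (_ : i - b = i - a + (a - b)); [exact: rpredD | lia].
by rewrite (_ : i - a = i - b - (a - b)); [exact: rpredB | lia].
Qed.

Section Basis.
Variable N : nat.
Local Notation Nz := N%:Z.

(* u_t, extended by zero outside [-N, N - 1]; this realizes the convention u_N = 0. *)
Definition uvec (t : int) : 'rV[algC]_(N.*2) := \row_j ind (idx j) t.

Lemma idx_range (j : 'I_(N.*2)) : - Nz <= idx j < Nz.
Proof. rewrite /idx; have := ltn_ord j; lia. Qed.

Lemma idx_inj : injective (@idx N).
Proof. move=> i j; rewrite /idx => h; apply/val_inj => /=; lia. Qed.

Lemma idx_surj (t : int) : - Nz <= t < Nz -> exists j : 'I_(N.*2), idx j = t.
Proof.
move=> ht; have hlt : (absz (t + Nz)%R < N.*2)%N by lia.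
by exists (Ordinal hlt); rewrite /idx /=; lia.
Qed.

Lemma uvec_out t : ~~ ((- Nz <= t) && (t < Nz)) -> uvec t = 0.
Proof.
move=> ht; apply/rowP => j; rewrite !mxE /ind.
by have := idx_range j; case: eqP => // ->; move: ht; lia.
Qed.

Lemma uvec_neq0 t : - Nz <= t < Nz -> uvec t != 0.
Proof.
case/idx_surj => j hj; apply/eqP => /rowP /(_ j).
by rewrite !mxE /ind hj eqxx => /eqP; rewrite oner_eq0.
Qed.

Lemma uvec_idx (i : 'I_(N.*2)) : uvec (idx i) = delta_mx 0 i.
Proof. by apply/rowP => j; rewrite !mxE /ind (inj_eq idx_inj). Qed.

Lemma uvec_mul_coefmx (f : int -> int -> algC) t : - Nz <= t < Nz ->
  uvec t *m (\matrix_(i, j) f (idx i) (idx j) : 'M_(N.*2)) = \row_j f t (idx j).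
Proof.
case/idx_surj => i0 <-; apply/rowP => j; rewrite !mxE (bigD1 i0) //= big1.
  by rewrite !mxE /ind eqxx mul1r addr0.
by move=> i hi; rewrite !mxE /ind (inj_eq idx_inj) (negbTE hi) mul0r.
Qed.

End Basis.

Section Action.
Variables (q : algC) (k : int) (N : nat).
Local Notation Nz := N%:Z.
Local Notation uvec := (@uvec N).
Local Notation A0 := (rhoA0 q N).
Local Notation B := (rhoAinf q k N).

Definition ck := q ^ (2 * k) + q ^ (- 2 * k).
Definition dk := (q ^+ 2 - q ^- 2) * (q ^ (2 * k) - q ^ (- 2 * k)).

Lemma uvec_rhoA0_nonpos t : (0 < N)%N -> - Nz <= t <= 0 -> uvec t *m A0 = lam q t *: uvec t.
Proof.
move=> N_gt0 ht; rewrite uvec_mul_coefmx; last by lia.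
by apply/rowP => j; rewrite !mxE /a0coef (_ : t <= 0 = true) //; lia.
Qed.

Lemma uvec_rhoA0_pos t : 0 < t < Nz -> uvec t *m A0 = lam q t *: uvec t + uvec (- t).
Proof.
move=> ht; rewrite uvec_mul_coefmx; last by lia.
by apply/rowP => j; rewrite !mxE /a0coef (_ : t <= 0 = false) //; lia.
Qed.

Lemma uvec_rhoAinf_bottom : (0 < N)%N ->
  uvec (- Nz) *m B = ck *: uvec (- Nz + 1) + dk *: uvec (Nz - 1).
Proof.
move=> N_gt0; rewrite uvec_mul_coefmx; last by lia.
by apply/rowP => j; rewrite !mxE /ainfcoef eqxx.
Qed.

Lemma uvec_rhoAinf_neg t : - Nz < t < 0 ->
  uvec t *m B = s_ q k t *: uvec (t + 1) + s_ q k (- t) *: uvec (t - 1).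
Proof.
move=> ht; rewrite uvec_mul_coefmx; last by lia.
by apply/rowP => j; rewrite !mxE /ainfcoef ifF ?ifT //; lia.
Qed.

Lemma uvec_rhoAinf0 : (0 < N)%N -> uvec 0 *m B = ck *: uvec (-1) - dk *: uvec 1.
Proof.
move=> N_gt0; rewrite uvec_mul_coefmx; last by lia.
by apply/rowP => j; rewrite !mxE /ainfcoef ifF ?ltxx ?eqxx //; lia.
Qed.

Lemma uvec_rhoAinf_pos t : 0 < t < Nz ->
  uvec t *m B = beta q k t *: uvec (- t - 1) - beta q k t *: uvec (- t + 1)
                + s'_ q k (- t) *: uvec (t - 1) + s'_ q k t *: uvec (t + 1).
Proof.
move=> ht; rewrite uvec_mul_coefmx; last by lia.
by apply/rowP => j; rewrite !mxE /ainfcoef !ifF //; lia.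
Qed.

End Action.

Lemma lamN q i : lam q (- i) = lam q i.
Proof. by rewrite /lam addrC; congr (q ^ _ + q ^ _); lia. Qed.

Section Roots.
Variables (q : algC) (k : int) (N : nat).
Hypothesis prim : (N.*2).-primitive_root (q ^+ 2).
Local Notation Nz := N%:Z.

Definition q2 (z : int) : algC := q ^ (2 * z).
Definition qdiff (z : int) : algC := q2 z - q2 (- z).

Lemma prim_half_gt0 : (0 < N)%N.
Proof. by have := prim_order_gt0 prim; lia. Qed.

Lemma q_neq0 : q != 0.
Proof.
apply/eqP => q0; have := prim_expr_order prim; rewrite -exprM q0 expr0n.
rewrite (_ : (2 * N.*2 == 0)%N = false) => [/eqP|]; first by rewrite eq_sym oner_eq0.
by have := prim_half_gt0; lia.
Qed.

Lemma q2_neq0 z : q2 z != 0.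
Proof. exact: expfz_neq0 q_neq0. Qed.

Lemma q2D a b : q2 (a + b) = q2 a * q2 b.
Proof. by rewrite /q2 mulrDr expfzDr // q_neq0. Qed.

Lemma q2N a : q2 (- a) = (q2 a)^-1.
Proof. by rewrite /q2 invr_expz mulrN. Qed.

Lemma q2_eq1 z : (q2 z == 1) = (N.*2%:Z %| z)%Z.
Proof.
rewrite /q2 -exprz_exp dvdzE; case: z => n /=.
  by rewrite -(prim_order_dvd prim).
by rewrite invr_eq1 -(prim_order_dvd prim).
Qed.

Lemma q2_eq a b : (q2 a == q2 b) = (N.*2%:Z %| a - b)%Z.
Proof.
have -> : q2 a = q2 (a - b) * q2 b by rewrite -q2D subrK.
rewrite -q2_eq1 -{2}[q2 b]mul1r.
by rewrite (inj_eq (mulIf (q2_neq0 b))).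
Qed.

Lemma qdiff_eq0 z : (qdiff z == 0) = (Nz %| z)%Z.
Proof.
rewrite subr_eq0 q2_eq opprK (_ : z + z = 2 * z); last by lia.
by rewrite (_ : N.*2%:Z = 2 * Nz) ?dvdz_mul2l // -muln2 PoszM mulrC.
Qed.

Lemma q2_half : q2 Nz = -1.
Proof.
have sq1 : q2 Nz ^+ 2 = 1.
  by apply/eqP; rewrite expr2 -q2D q2_eq1; apply/dvdzP; exists 1; lia.
have ne1 : q2 Nz != 1 by rewrite q2_eq1 (@between_ndvdz _ _ 0) //; have := prim_half_gt0; lia.
have /eqP : (q2 Nz - 1) * (q2 Nz + 1) = 0 by rewrite -subr_sqr sq1 expr1n subrr.
by rewrite mulf_eq0 subr_eq0 (negbTE ne1) addr_eq0 => /eqP.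
Qed.

Lemma lam_q2 i : lam q i = q2 i + q2 (- i).
Proof. by rewrite /lam /q2; congr (q ^ _ + q ^ _); lia. Qed.

Lemma s_qdiff i : s_ q k i = qdiff (i - k) / qdiff i.
Proof. by rewrite /s_ /qdiff /q2; congr ((q ^ _ - q ^ _) / (q ^ _ - q ^ _)); lia. Qed.

Lemma s'_qdiff i : s'_ q k i = qdiff (i + 1) / qdiff i * s_ q k i.
Proof. by rewrite /s'_ /qdiff /q2; congr ((q ^ _ - q ^ _) / (q ^ _ - q ^ _) * _); lia. Qed.

Lemma beta_qdiff i : beta q k i = qdiff k / qdiff i ^+ 3.
Proof. by rewrite /beta /qdiff /q2; congr ((q ^ _ - q ^ _) / (q ^ _ - q ^ _) ^+ 3); lia. Qed.

Lemma dk_qdiff : dk q k = qdiff 1 * qdiff k.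
Proof.
rewrite /dk /qdiff /q2 mulr1 mulrN1 -invr_expz.
by congr ((_ - _) * (q ^ _ - q ^ _)); lia.
Qed.

Lemma wpar_q2 : wpar q k = - q2 (2 * k + 1) - q2 (- (2 * k + 1)).
Proof. by rewrite /wpar /q2; congr (- q ^ _ - q ^ _); lia. Qed.

Lemma s_eq0 i : (Nz %| i - k)%Z -> s_ q k i = 0.
Proof. by rewrite -qdiff_eq0 s_qdiff => /eqP ->; rewrite mul0r. Qed.

Lemma s_neq0 i : ~~ (Nz %| i)%Z -> ~~ (Nz %| i - k)%Z -> s_ q k i != 0.
Proof. by rewrite -!qdiff_eq0 s_qdiff => h1 h2; rewrite mulf_neq0 ?invr_neq0. Qed.

Lemma s'_eq0 i : (Nz %| i - k)%Z -> s'_ q k i = 0.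
Proof. by move=> h; rewrite s'_qdiff s_eq0 // mulr0. Qed.

Lemma s'_neq0 i : ~~ (Nz %| i)%Z -> ~~ (Nz %| i + 1)%Z -> ~~ (Nz %| i - k)%Z ->
  s'_ q k i != 0.
Proof.
move=> h1 h2 h3; rewrite s'_qdiff mulf_neq0 ?s_neq0 //.
by rewrite -!qdiff_eq0 in h1 h2; rewrite mulf_neq0 ?invr_neq0.
Qed.

Lemma beta_neq0 i : ~~ (Nz %| i)%Z -> ~~ (Nz %| k)%Z -> beta q k i != 0.
Proof. by rewrite -!qdiff_eq0 beta_qdiff => h1 h2; rewrite mulf_neq0 ?invr_neq0 ?expf_neq0. Qed.

Lemma dk_eq0 : (Nz %| k)%Z -> dk q k = 0.
Proof. by rewrite -qdiff_eq0 dk_qdiff => /eqP ->; rewrite mulr0. Qed.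

Lemma dk_neq0 : ~~ (Nz %| 1)%Z -> ~~ (Nz %| k)%Z -> dk q k != 0.
Proof. by rewrite -!qdiff_eq0 dk_qdiff => h1 h2; rewrite mulf_neq0. Qed.

Lemma lamB a b : lam q a - lam q b = (q2 a - q2 b) * (1 - q2 (- a - b)).
Proof.
rewrite !lam_q2 q2D !q2N.
have := q2_neq0 a; have := q2_neq0 b; move: (q2 a) (q2 b) => y z hz hy.
by field; rewrite hz hy.
Qed.

Lemma lam_inj : {in [pred t | - Nz <= t <= 0] &, injective (lam q)}.
Proof.
move=> a b; rewrite !inE => ha hb /eqP; have := prim_half_gt0.
rewrite -subr_eq0 lamB mulf_eq0 subr_eq0 q2_eq subr_eq0 eq_sym q2_eq1 => N0 /orP [h|h].
  by apply/eqP; rewrite -subr_eq0; apply/eqP; apply: (small_dvdz_eq0 _ _ h); lia.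
have [lt2N|] : - a - b < N.*2%:Z \/ - a - b = N.*2%:Z by lia.
  by have := small_dvdz_eq0 _ _ h; lia.
by lia.
Qed.

Lemma wpar_eq2_dvdz : (wpar q k == 2) = (N.*2%:Z %| 2 * k + 1 - Nz)%Z.
Proof.
rewrite -q2_eq q2_half wpar_q2 q2N.
have := q2_neq0 (2 * k + 1); move: (q2 _) => y hy.
rewrite (_ : - y - y^-1 = 2 - (y + 1) ^+ 2 / y); last by field; rewrite hy.
rewrite -subr_eq0 addrAC subrr add0r oppr_eq0 mulf_eq0 invr_eq0 (negbTE hy) orbF.
by rewrite expf_eq0 /= addr_eq0.
Qed.

End Roots.

Section SubspaceClosure.
Variables (F : fieldType) (m n : nat) (U : 'M[F]_(m, n)).

Lemma subBmx_sub p (A B : 'M_(p, n)) : (A <= U)%MS -> (B <= U)%MS -> ((A - B)%R <= U)%MS.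
Proof. by move=> hA hB; rewrite addmx_sub // -scaleN1r scalemx_sub. Qed.

Lemma addmx_subKl p (A B : 'M_(p, n)) : (A <= U)%MS -> ((A + B)%R <= U)%MS -> (B <= U)%MS.
Proof. by move=> hA hAB; rewrite -(addrK A B) (addrC B A) subBmx_sub. Qed.

Lemma addmx_subKr p (A B : 'M_(p, n)) : (B <= U)%MS -> ((A + B)%R <= U)%MS -> (A <= U)%MS.
Proof. by rewrite addrC; apply: addmx_subKl. Qed.

Lemma subBmx_subKl p (A B : 'M_(p, n)) : (A <= U)%MS -> ((A - B)%R <= U)%MS -> (B <= U)%MS.
Proof. by move=> hA hAB; rewrite -[B](subKr A) subBmx_sub. Qed.

Lemma stablemx_mul_sub p (A : 'M_(p, n)) (M : 'M_n) :
  stablemx U M -> (A <= U)%MS -> (A *m M <= U)%MS.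
Proof. by move=> sM hA; apply: submx_trans sM; rewrite submxMr. Qed.

End SubspaceClosure.

Lemma stablemx_eigenvector (F : closedFieldType) n (U A : 'M[F]_n) :
  stablemx U A -> (0 < \rank U)%N ->
  exists a, exists2 v : 'rV_n, v != 0 & (v <= U)%MS /\ v *m A = a *: v.
Proof.
move=> sA rU; pose f := restrictmx U A.
have [a /eigenvalueP [y hy y0]] : exists a, eigenvalue f a.
  have /closed_rootP [a ha] : size (char_poly f) != 1%N.
    by rewrite size_char_poly; case: (\rank U) rU.
  by exists a; rewrite eigenvalue_root_char.
exists a, (y *m row_base U); first by rewrite mulmx_free_eq0 ?row_base_free.
split; first by rewrite -(eq_row_base U) submxMl.
apply/eigenspaceP; rewrite -sub_eigenspace_conjmx ?row_base_free ?stablemx_row_base //.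
exact/eigenspaceP.
Qed.

Section Alpha0.
Variables (q : algC) (N : nat).
Hypothesis prim : (N.*2).-primitive_root (q ^+ 2).
Local Notation Nz := N%:Z.
Local Notation uvec := (@uvec N).
Local Notation A0 := (rhoA0 q N).
Let N_gt0 := prim_half_gt0 prim.

Lemma a0coef_mul (x : algC) (i j : 'I_(N.*2)) :
  x * a0coef q (idx i) (idx j) =
  (if i == j then lam q (idx j) * x else 0)
  + (if (idx j < 0) && (idx i == - idx j) then x else 0).
Proof.
rewrite -(inj_eq (@idx_inj N)) /a0coef /ind; move: (idx i) (idx j) => a b.
have [->|ba] := eqVneq b a.
  rewrite /= mulr1n mulr1 (_ : (a < 0) && (a == - a) = false) ?addr0; last by lia.
  case: ifP => ha; first by ring.
  by rewrite (_ : (a == - a) = false) ?mulr0n ?addr0; [ring | lia].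
rewrite /= mulr0n mulr0 add0r; case: ifP => ha.
  by rewrite (_ : (b < 0) && (a == - b) = false) ?mulr0 ?addr0 //; lia.
rewrite add0r (_ : (b == - a) = (b < 0) && (a == - b)); last by lia.
by case: ifP; rewrite ?mulr1n ?mulr0n ?mulr1 ?mulr0.
Qed.

Lemma rhoA0_coord (v : 'rV_(N.*2)) j :
  (v *m A0) 0 j = lam q (idx j) * v 0 j
                  + \sum_(i | (idx j < 0) && (idx i == - idx j)) v 0 i.
Proof.
rewrite mxE; under eq_bigr do rewrite /rhoA0 mxE a0coef_mul.
by rewrite big_split /= -big_mkcond big_pred1_eq -big_mkcond.
Qed.

Section Eigenvector.
Variables (v : 'rV[algC]_(N.*2)) (a : algC).
Hypothesis vA0 : v *m A0 = a *: v.

Lemma eigen_coord j :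
  lam q (idx j) * v 0 j + \sum_(i | (idx j < 0) && (idx i == - idx j)) v 0 i = a * v 0 j.
Proof. by rewrite -rhoA0_coord vA0 mxE. Qed.

Lemma eigen_coord_pos j : 0 < idx j -> v 0 j = 0.
Proof.
move=> hj; apply/eqP/negPn/negP => vj.
have laj : lam q (idx j) = a.
  apply: (mulIf vj); rewrite -eigen_coord big_pred0 ?addr0 // => i /=.
  by rewrite (_ : (idx j < 0) = false) //; lia.
have [j' hj'] : exists j' : 'I_(N.*2), idx j' = - idx j.
  by apply: idx_surj; have := idx_range j; lia.
have := eigen_coord j'; rewrite hj' lamN laj opprK (big_pred1 j) => [/eqP|i].
  by rewrite -[X in _ == X]addr0 (inj_eq (addrI _)) (negbTE vj).
by rewrite /= (inj_eq (@idx_inj N)) (_ : (- idx j < 0) = true) //; lia.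
Qed.

Lemma eigen_coord_diag j : lam q (idx j) * v 0 j = a * v 0 j.
Proof.
rewrite -eigen_coord big1 ?addr0 // => i /andP [j0 /eqP ij].
by apply: eigen_coord_pos; lia.
Qed.

Lemma eigen_uvec : v != 0 ->
  exists2 t, - Nz <= t <= 0 & exists2 c, c != 0 & v = c *: uvec t.
Proof.
move=> v0; have [j0 vj0] : exists j, v 0 j != 0.
  apply/existsP; apply: contraNT v0 => /existsPn vz.
  by apply/eqP/rowP => j; rewrite mxE; apply/eqP/negPn.
have j0_le0 : idx j0 <= 0.
  by rewrite leNgt; apply: contra vj0 => /eigen_coord_pos ->.
have ha : a = lam q (idx j0) by apply: (mulIf vj0); rewrite eigen_coord_diag.
exists (idx j0); first by have := idx_range j0; lia.
exists (v 0 j0) => //; apply/rowP => j; rewrite !mxE /ind (inj_eq (@idx_inj N)).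
have [-> | jj0] := eqVneq j j0; first by rewrite mulr1.
rewrite mulr0; have [/eigen_coord_pos // | j_le0] := ltrP 0 (idx j).
have /eqP := eigen_coord_diag j; rewrite ha -subr_eq0 -mulrBl mulf_eq0 subr_eq0.
case/orP => [/eqP lajj0|/eqP //]; case/eqP: jj0; apply: idx_inj.
by apply: (lam_inj prim); rewrite ?inE //; have := idx_range j; have := idx_range j0; lia.
Qed.

End Eigenvector.

Lemma stable_rhoA0_uvec (U : 'M_(N.*2)) : stablemx U A0 -> (0 < \rank U)%N ->
  exists2 t, - Nz <= t <= 0 & (uvec t <= U)%MS.
Proof.
move=> sA rU; have [a [v v0 [vU vA0]]] := stablemx_eigenvector sA rU.
have [t ht [c c0 vc]] := eigen_uvec vA0 v0.
by exists t => //; rewrite -(eqmx_scale _ c0) -vc.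
Qed.

Section Separation.
Variable U : 'M[algC]_(N.*2).
Hypothesis sA : stablemx U A0.

Lemma lower_pair_sub s t x y : - Nz <= s <= 0 -> - Nz <= t <= 0 -> s != t -> x != 0 ->
  ((x *: uvec s + y *: uvec t)%R <= U)%MS -> (uvec s <= U)%MS.
Proof.
move=> hs ht st x0 hv.
have lst : lam q s - lam q t != 0.
  by rewrite subr_eq0; apply: contra st => /eqP /(lam_inj prim); rewrite !inE => ->.
have : ((x *: uvec s + y *: uvec t) *m A0 - lam q t *: (x *: uvec s + y *: uvec t))%R
       = (x * (lam q s - lam q t)) *: uvec s.
  rewrite mulmxDl -!scalemxAl (uvec_rhoA0_nonpos q N_gt0 hs) (uvec_rhoA0_nonpos q N_gt0 ht).
  by apply/rowP => j; rewrite !mxE; ring.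
move=> E; rewrite -(eqmx_scale _ (mulf_neq0 x0 lst)) -E.
by rewrite subBmx_sub ?scalemx_sub // stablemx_mul_sub.
Qed.

Lemma mirror_pair_sub p x y : 0 < p < Nz -> y != 0 ->
  ((x *: uvec (- p) + y *: uvec p)%R <= U)%MS -> (uvec (- p) <= U)%MS.
Proof.
move=> hp y0 hv.
have : ((x *: uvec (- p) + y *: uvec p) *m A0 - lam q p *: (x *: uvec (- p) + y *: uvec p))%R
       = y *: uvec (- p).
  rewrite mulmxDl -!scalemxAl (uvec_rhoA0_pos q hp) uvec_rhoA0_nonpos // ?(lamN q); last by lia.
  by apply/rowP => j; rewrite !mxE; ring.
move=> E; rewrite -(eqmx_scale _ y0) -E.
by rewrite subBmx_sub ?scalemx_sub // stablemx_mul_sub.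
Qed.

End Separation.

End Alpha0.

Section CoordinateSubspace.
Variable N : nat.
Local Notation Nz := N%:Z.
Local Notation uvec := (@uvec N).
Implicit Types P : int -> bool.

Definition span_uvec (P : int -> bool) : 'M[algC]_(N.*2) := diag_mx (\row_i (P (idx i))%:R).

Lemma row_span_uvec P i : row i (span_uvec P) = if P (idx i) then uvec (idx i) else 0.
Proof.
apply/rowP => j; rewrite !mxE.
case: (P (idx i)); rewrite ?mxE ?mul0rn // /ind (inj_eq (@idx_inj N)) eq_sym.
by case: (i == j).
Qed.

Lemma uvec_sub_span P t : P t -> (uvec t <= span_uvec P)%MS.
Proof.
move=> Pt; have [ht|ht] := boolP ((- Nz <= t) && (t < Nz)); last by rewrite uvec_out ?sub0mx.
by case/idx_surj: ht => i it; apply/(eq_row_sub i); rewrite row_span_uvec it Pt.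
Qed.

Lemma scale_uvec_sub_span P a t : a = 0 \/ P t -> (a *: uvec t <= span_uvec P)%MS.
Proof. by case=> [->|Pt]; rewrite ?scale0r ?sub0mx // scalemx_sub ?uvec_sub_span. Qed.

Lemma stablemx_span P M :
  (forall t, - Nz <= t < Nz -> P t -> (uvec t *m M <= span_uvec P)%MS) ->
  stablemx (span_uvec P) M.
Proof.
move=> PM; apply/row_subP => i; rewrite row_mul row_span_uvec.
by case: ifP => Pi; rewrite ?mul0mx ?sub0mx // PM ?idx_range.
Qed.

Lemma rank_span P s t : - Nz <= s < Nz -> P s -> - Nz <= t < Nz -> ~~ P t ->
  (0 < \rank (span_uvec P) < N.*2)%N.
Proof.
move=> hs Ps ht Pt; apply/andP; split.
  by have := mxrankS (uvec_sub_span Ps); rewrite rank_rV uvec_neq0.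
rewrite ltn_neqAle rank_leq_row andbT; apply/negP => /eqP full.
have : row_free (span_uvec P) by rewrite /row_free full.
case/idx_surj: ht => i hi.
rewrite row_free_unit unitmxE det_diag unitfE (bigD1 i) //= !mxE hi (negbTE Pt).
by rewrite mul0r eqxx.
Qed.

End CoordinateSubspace.

Arguments span_uvec {N} P.

Section Residue.
Variables (q : algC) (k : int) (N : nat) (r : int).
Hypothesis prim : (N.*2).-primitive_root (q ^+ 2).
Hypotheses (r_ge0 : 0 <= r) (r_ltN : r < N%:Z) (k_mod : (N%:Z %| k - r)%Z).
Local Notation Nz := N%:Z.
Local Notation uvec := (@uvec N).
Local Notation A0 := (rhoA0 q N).
Local Notation B := (rhoAinf q k N).

Let N_gt0 := prim_half_gt0 prim.

Lemma dvdz_subk i : (Nz %| i - k)%Z = (Nz %| i - r)%Z.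
Proof. exact: dvdz_subr_congr. Qed.

Lemma reducible_gt : Nz < 2 * r + 1 -> reducible2 A0 B.
Proof.
move=> rN; pose P : int -> bool := fun t => (- r <= t) && (t <= r - Nz).
exists (span_uvec P); split.
- apply: stablemx_span => t ht Pt; rewrite uvec_rhoA0_nonpos //; last by move: Pt; rewrite /P; lia.
  by rewrite scalemx_sub ?uvec_sub_span.
- apply: stablemx_span => t ht Pt; rewrite uvec_rhoAinf_neg; last by move: Pt; rewrite /P; lia.
  apply: addmx_sub; apply: scale_uvec_sub_span.
    have [->|ne] := eqVneq t (r - Nz); last by right; move: Pt ne; rewrite /P; lia.
    by left; apply: (s_eq0 prim); rewrite dvdz_subk (_ : r - Nz - r = - Nz) ?rpredN ?dvdzz //; ring.
  have [->|ne] := eqVneq t (- r); last by right; move: Pt ne; rewrite /P; lia.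
  by left; apply: (s_eq0 prim); rewrite dvdz_subk opprK subrr dvdz0.
- by apply: (@rank_span _ P (- r) 0); rewrite /P; lia.
Qed.

Lemma reducible_lt : 2 * r + 1 < Nz -> reducible2 A0 B.
Proof.
move=> rN; pose P : int -> bool := fun t => (t <= 0) || ((1 <= t) && (t <= r)) || (Nz - r <= t).
have Pnonpos t : t <= 0 -> P t by rewrite /P; lia.
have dk_or : dk q k = 0 \/ 1 <= r.
  have [r0|] := eqVneq r 0; last by right; lia.
  by left; apply: (dk_eq0 prim); move: k_mod; rewrite r0 subr0.
exists (span_uvec P); split.
- apply: stablemx_span => t ht Pt.
  have [t_le0|t_gt0] := lerP t 0.
    rewrite uvec_rhoA0_nonpos //; last by lia.
    by apply: scale_uvec_sub_span; right.
  rewrite uvec_rhoA0_pos; last by lia.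
  apply: addmx_sub; first by apply: scale_uvec_sub_span; right.
  by apply: uvec_sub_span; apply: Pnonpos; lia.
- apply: stablemx_span => t ht Pt.
  have [->|tN] := eqVneq t (- Nz).
    rewrite uvec_rhoAinf_bottom //; apply: addmx_sub; apply: scale_uvec_sub_span.
      by right; apply: Pnonpos; lia.
    by case: dk_or => [|r1]; [left | right; rewrite /P; lia].
  have [t_lt0|t_ge0] := ltrP t 0.
    rewrite uvec_rhoAinf_neg; last by lia.
    by apply: addmx_sub; apply: scale_uvec_sub_span; right; apply: Pnonpos; lia.
  have [->|t_neq0] := eqVneq t 0.
    rewrite uvec_rhoAinf0 //; apply: subBmx_sub; apply: scale_uvec_sub_span.
      by right; apply: Pnonpos; lia.
    by case: dk_or => [|r1]; [left | right; rewrite /P; lia].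
  rewrite uvec_rhoAinf_pos; last by lia.
  apply: addmx_sub; [apply: addmx_sub; [apply: subBmx_sub|] |]; apply: scale_uvec_sub_span.
  + by right; apply: Pnonpos; lia.
  + by right; apply: Pnonpos; lia.
  + have [t1|t_neq1] := eqVneq t 1; first by right; apply: Pnonpos; lia.
    have [tr|t_neqr] := eqVneq t (Nz - r); last by right; move: Pt t_neq1 t_neqr; rewrite /P; lia.
    by left; apply: (s'_eq0 prim); rewrite dvdz_subk (_ : - t - r = - Nz) ?rpredN ?dvdzz //; lia.
  + have [->|t_neqr] := eqVneq t r; last by right; move: Pt t_neqr; rewrite /P; lia.
    by left; apply: (s'_eq0 prim); rewrite dvdz_subk subrr dvdz0.
- by apply: (@rank_span _ P 0 (r + 1)); rewrite /P; lia.
Qed.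

End Residue.

Lemma int_ind_up (P : int -> Prop) (lo hi : int) :
  P lo -> (forall t, lo <= t < hi -> P t -> P (t + 1)) ->
  forall t, lo <= t <= hi -> P t.
Proof.
move=> Plo step; suff Pn (n : nat) : lo + n%:Z <= hi -> P (lo + n%:Z).
  by move=> t ht; rewrite (_ : t = lo + (absz (t - lo))%:Z); [apply: Pn | ]; lia.
elim: n => [|n IH] hn; first by rewrite addr0.
by rewrite (_ : lo + n.+1%:Z = lo + n%:Z + 1); [apply: step; [|apply: IH] | ]; lia.
Qed.

Lemma int_ind_down (P : int -> Prop) (lo hi : int) :
  P hi -> (forall t, lo < t <= hi -> P t -> P (t - 1)) ->
  forall t, lo <= t <= hi -> P t.
Proof.
move=> Phi step t ht; rewrite -[t]opprK.
apply: (@int_ind_up (fun s => P (- s)) (- hi) (- lo)); rewrite ?opprK //; last by lia.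
by move=> s hs Ps; rewrite opprD; apply: step => //; lia.
Qed.

Lemma int_interval_all (P : int -> Prop) (lo hi t0 : int) :
  lo <= t0 <= hi -> P t0 ->
  (forall t, lo <= t < hi -> P t -> P (t + 1)) ->
  (forall t, lo < t <= hi -> P t -> P (t - 1)) ->
  forall t, lo <= t <= hi -> P t.
Proof.
move=> ht0 Pt0 up down; apply: (int_ind_down (lo := lo) _ down).
by apply: (@int_ind_up P t0 hi) => // [t ht|]; [apply: up | ]; lia.
Qed.

Section Irreducible.
Variables (q : algC) (k : int) (N : nat) (r : int) (U : 'M[algC]_(N.*2)).
Hypothesis prim : (N.*2).-primitive_root (q ^+ 2).
Hypotheses (N_odd : N%:Z = 2 * r + 1) (r_ge1 : 1 <= r) (k_mod : (N%:Z %| k - r)%Z).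
Hypotheses (sA : stablemx U (rhoA0 q N)) (sB : stablemx U (rhoAinf q k N)).
Local Notation Nz := N%:Z.
Local Notation uvec := (@uvec N).
Local Notation inU t := (uvec t <= U)%MS.

Let N_gt0 := prim_half_gt0 prim.

Lemma ndvdz_half a z : a * Nz < z < (a + 1) * Nz -> ~~ (Nz %| z)%Z.
Proof. by apply: between_ndvdz; lia. Qed.

Lemma k_ndvd : ~~ (Nz %| k)%Z.
Proof.
have := dvdz_subr_congr 0 k_mod; rewrite !sub0r !rpredN => ->.
by apply: (@ndvdz_half 0); lia.
Qed.

Lemma s_neq0r i : ~~ (Nz %| i)%Z -> ~~ (Nz %| i - r)%Z -> s_ q k i != 0.
Proof. by rewrite -(dvdz_subr_congr _ k_mod); apply: s_neq0. Qed.

Lemma s'_neq0r i : ~~ (Nz %| i)%Z -> ~~ (Nz %| i + 1)%Z -> ~~ (Nz %| i - r)%Z ->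
  s'_ q k i != 0.
Proof. by rewrite -(dvdz_subr_congr _ k_mod); apply: s'_neq0. Qed.

Lemma s'_eq0r i : (Nz %| i - r)%Z -> s'_ q k i = 0.
Proof. by rewrite -(dvdz_subr_congr _ k_mod); apply: s'_eq0. Qed.

Lemma beta_neq0r i : ~~ (Nz %| i)%Z -> beta q k i != 0.
Proof. by move/(beta_neq0 prim); apply; apply: k_ndvd. Qed.

Lemma dk_neq0r : dk q k != 0.
Proof. by apply: (dk_neq0 prim _ k_ndvd); apply: (@ndvdz_half 0); lia. Qed.

(* On the lower half rho(alpha_infty) links neighbours, except between -r - 1 and -r
   (s_{-r-1} = s_r = 0): the inner block [-r, 0] and the outer block [-N, -r - 1]
   are joined only through the positive indices. *)

Lemma inner_up t : - r <= t < 0 -> inU t -> inU (t + 1).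
Proof.
move=> ht It; have := stablemx_mul_sub sB It; rewrite uvec_rhoAinf_neg; last by lia.
move/(lower_pair_sub prim sA); apply; try lia.
by apply: s_neq0r; apply: (@ndvdz_half (-1)); lia.
Qed.

Lemma inner_down t : - r < t <= 0 -> inU t -> inU (t - 1).
Proof.
move=> ht It; have := stablemx_mul_sub sB It.
have [t0|t_neq0] := eqVneq t 0.
  rewrite t0 uvec_rhoAinf0 // -scaleNr sub0r => /(mirror_pair_sub prim sA); apply; first by lia.
  by rewrite oppr_eq0 dk_neq0r.
rewrite uvec_rhoAinf_neg; last by lia.
rewrite addrC => /(lower_pair_sub prim sA); apply; try lia.
by apply: s_neq0r; [apply: (@ndvdz_half 0) | apply: (@ndvdz_half (-1))]; lia.
Qed.

Lemma outer_up t : - Nz <= t < - r - 1 -> inU t -> inU (t + 1).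
Proof.
move=> ht It; have := stablemx_mul_sub sB It.
have [tN|tN] := eqVneq t (- Nz).
  rewrite tN uvec_rhoAinf_bottom // (_ : - Nz + 1 = - (Nz - 1)); last by ring.
  by move/(mirror_pair_sub prim sA); apply; [lia | exact: dk_neq0r].
rewrite uvec_rhoAinf_neg; last by lia.
move/(lower_pair_sub prim sA); apply; try lia.
by apply: s_neq0r; [apply: (@ndvdz_half (-1)) | apply: (@ndvdz_half (-2))]; lia.
Qed.

Lemma outer_down t : - Nz < t <= - r - 1 -> inU t -> inU (t - 1).
Proof.
move=> ht It; have := stablemx_mul_sub sB It; rewrite uvec_rhoAinf_neg; last by lia.
rewrite addrC => /(lower_pair_sub prim sA); apply; try lia.
by apply: s_neq0r; apply: (@ndvdz_half 0); lia.
Qed.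

Lemma inner_pos : (forall t, - r <= t <= 0 -> inU t) -> forall t, - r <= t <= r -> inU t.
Proof.
move=> low; suff upto : forall t, 0 <= t <= r -> forall s, - r <= s <= t -> inU s.
  by move=> s hs; apply: (upto r) => //; lia.
apply: (@int_ind_up (fun t => forall s, - r <= s <= t -> inU s)) => [s hs | t ht IH s hs].
  by apply: low; lia.
have [s_le|->] : s <= t \/ s = t + 1 by lia.
  by apply: IH; lia.
have [t0|t_gt0] := eqVneq t 0.
  have := stablemx_mul_sub sB (IH 0 ltac:(lia)); rewrite uvec_rhoAinf0 // => hv.
  rewrite t0 add0r -(eqmx_scale _ dk_neq0r); apply: (subBmx_subKl _ hv).
  by apply: scalemx_sub; apply: IH; lia.
have hv := stablemx_mul_sub sB (IH t ltac:(lia)); rewrite uvec_rhoAinf_pos in hv; last by lia.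
have s't : s'_ q k t != 0.
  by apply: s'_neq0r; [apply: (@ndvdz_half 0) | apply: (@ndvdz_half 0) |
                      apply: (@ndvdz_half (-1))]; lia.
rewrite -(eqmx_scale _ s't); apply: (addmx_subKl _ hv).
by apply: addmx_sub; [apply: subBmx_sub|]; apply: scalemx_sub; apply: IH; lia.
Qed.

Lemma inner_cross : (forall t, - r <= t <= r -> inU t) -> inU (- r - 1).
Proof.
move=> mid; have hv := stablemx_mul_sub sB (mid r ltac:(lia)).
rewrite uvec_rhoAinf_pos in hv; last by lia.
have s'r : s'_ q k r = 0 by apply: s'_eq0r; rewrite subrr dvdz0.
rewrite s'r scale0r addr0 -addrA in hv.
have b0 : beta q k r != 0 by apply: beta_neq0r; apply: (@ndvdz_half 0); lia.
rewrite -(eqmx_scale _ b0); apply: (addmx_subKr _ hv).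
by rewrite addrC; apply: subBmx_sub; apply: scalemx_sub; apply: mid; lia.
Qed.

Lemma outer_pos : (forall t, - Nz <= t <= - r - 1 -> inU t) -> forall t, r + 1 <= t <= Nz -> inU t.
Proof.
move=> low; suff from : forall t, r + 1 <= t <= Nz -> forall s, t <= s <= Nz -> inU s.
  by move=> s hs; apply: (from s) => //; lia.
apply: (@int_ind_down (fun t => forall s, t <= s <= Nz -> inU s)) => [s hs | t ht IH s hs].
  by rewrite (_ : s = Nz) ?uvec_out ?sub0mx //; lia.
have [s_ge|->] : t <= s \/ s = t - 1 by lia.
  by apply: IH; lia.
have [tN|t_ltN] := eqVneq t Nz.
  have := stablemx_mul_sub sB (low (- Nz) ltac:(lia)); rewrite uvec_rhoAinf_bottom // => hv.
  rewrite tN -(eqmx_scale _ dk_neq0r); apply: (addmx_subKl _ hv).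
  by apply: scalemx_sub; apply: low; lia.
have hv := stablemx_mul_sub sB (IH t ltac:(lia)); rewrite uvec_rhoAinf_pos in hv; last by lia.
rewrite addrAC in hv.
have s't : s'_ q k (- t) != 0.
  by apply: s'_neq0r; [apply: (@ndvdz_half (-1)) | apply: (@ndvdz_half (-1)) |
                      apply: (@ndvdz_half (-2))]; lia.
rewrite -(eqmx_scale _ s't); apply: (addmx_subKl _ hv).
apply: addmx_sub; [apply: subBmx_sub|]; apply: scalemx_sub;
  [apply: low | apply: low | apply: IH]; lia.
Qed.

Lemma outer_cross : (forall t, - Nz <= t <= - r - 1 -> inU t) ->
  (forall t, r + 1 <= t <= Nz -> inU t) -> inU (- r).
Proof.
move=> low high; have hv := stablemx_mul_sub sB (high (r + 1) ltac:(lia)).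
rewrite uvec_rhoAinf_pos in hv; last by lia.
have s'r1 : s'_ q k (- (r + 1)) = 0.
  by apply: s'_eq0r; rewrite (_ : - (r + 1) - r = - Nz) ?rpredN ?dvdzz //; lia.
rewrite s'r1 scale0r addr0 addrAC in hv.
rewrite (_ : - (r + 1) + 1 = - r) in hv; last by ring.
have b0 : beta q k (r + 1) != 0 by apply: beta_neq0r; apply: (@ndvdz_half 0); lia.
rewrite -(eqmx_scale _ b0); apply: (subBmx_subKl _ hv).
by apply: addmx_sub; apply: scalemx_sub; [apply: low | apply: high]; lia.
Qed.

Lemma inner_sub t0 : - r <= t0 <= 0 -> inU t0 -> forall t, - r <= t <= 0 -> inU t.
Proof.
move=> ht0 It0; apply: (int_interval_all ht0 It0) => t ht; first by apply: inner_up; lia.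
by apply: inner_down; lia.
Qed.

Lemma outer_sub t0 : - Nz <= t0 <= - r - 1 -> inU t0 -> forall t, - Nz <= t <= - r - 1 -> inU t.
Proof.
move=> ht0 It0; apply: (int_interval_all ht0 It0) => t ht; first by apply: outer_up; lia.
by apply: outer_down; lia.
Qed.

Lemma all_uvec_sub t0 : - Nz <= t0 <= 0 -> inU t0 -> forall t, - Nz <= t < Nz -> inU t.
Proof.
move=> ht0 It0.
have [low high] : (forall t, - r <= t <= 0 -> inU t) /\ (forall t, - Nz <= t <= - r - 1 -> inU t).
  have [t0_ge|t0_lt] := lerP (- r) t0.
    have low := inner_sub (t0 := t0) ltac:(lia) It0.
    split => //; apply: (outer_sub (t0 := - r - 1)); first by lia.
    exact: inner_cross (inner_pos low).
  have high := outer_sub (t0 := t0) ltac:(lia) It0.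
  split => //; apply: (inner_sub (t0 := - r)); first by lia.
  exact: outer_cross high (outer_pos high).
move=> t ht.
have [t_le|t_gt] := lerP t (- r - 1); first by apply: high; lia.
have [t_le'|t_gt'] := lerP t r; first by apply: (inner_pos low (t := t)); lia.
by apply: (outer_pos high (t := t)); lia.
Qed.

End Irreducible.

Lemma rho_irreducible q k N r : (N.*2).-primitive_root (q ^+ 2) ->
  N%:Z = 2 * r + 1 -> 1 <= r -> (N%:Z %| k - r)%Z -> ~ reducible2 (rhoA0 q N) (rhoAinf q k N).
Proof.
move=> prim N_odd r_ge1 k_mod [U [sA sB /andP [rU_gt0 rU_lt]]].
have [t0 ht0 It0] := stable_rhoA0_uvec prim sA rU_gt0.
have full : (1%:M <= U)%MS.
  apply/row_subP => i; rewrite row1 -uvec_idx.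
  by apply: (all_uvec_sub prim N_odd r_ge1 k_mod sA sB ht0 It0); apply: idx_range.
by move/mxrankS: full; rewrite mxrank1 leqNgt rU_lt.
Qed.

Lemma wpar_eq2 (q : algC) (k : int) (N : nat) : (N.*2).-primitive_root (q ^+ 2) ->
  (wpar q k == 2) = (2 * (k %% N%:Z)%Z + 1 == N%:Z).
Proof.
move=> prim; have N_gt0 := prim_half_gt0 prim.
rewrite (wpar_eq2_dvdz k prim).
have -> : 2 * k + 1 - N%:Z = (2 * (k %% N%:Z)%Z + 1 - N%:Z) + (k %/ N%:Z)%Z * N.*2%:Z.
  by rewrite (_ : N.*2%:Z = 2 * N%:Z) -?muln2 ?PoszM ?[_ * 2]mulrC //; have := divz_eq k N%:Z; lia.
rewrite rpredDr ?dvdz_mull ?dvdzz //; apply/idP/eqP => [h|->]; last by rewrite subrr dvdz0.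
by apply/eqP; rewrite -subr_eq0; apply/eqP/(small_dvdz_eq0 _ _ h); lia.
Qed.

Lemma prim_half_ge2 (q : algC) (N : nat) :
  (N.*2).-primitive_root (q ^+ 2) -> q ^+ 4 != 1 -> (2 <= N)%N.
Proof.
move=> prim q4; have N_gt0 := prim_half_gt0 prim.
rewrite ltn_neqAle N_gt0 andbT; apply: contra q4 => /eqP N1.
by move: (prim_expr_order prim); rewrite -N1 -exprM => ->.
Qed.

Unset Implicit Arguments.

Theorem mainTheorem14 (q : algC) (n : nat) (k : int) :
  n.-primitive_root (q ^+ 2) -> ~~ odd n -> q ^+ 4 != 1 ->
  (reducible2 (rhoA0 q (n./2)) (rhoAinf q k (n./2)) <-> wpar q k != 2).
Proof.
move=> prim n_even q4.
have n_double : n = (n./2).*2 by rewrite -{1}(odd_double_half n) (negbTE n_even).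
rewrite n_double in prim; set N := n./2 in prim *.
have N_ge2 := prim_half_ge2 prim q4.
set r := (k %% N%:Z)%Z; have /andP [r_ge0 r_ltN] : 0 <= r < N%:Z by rewrite /r; lia.
have k_mod : (N%:Z %| k - r)%Z.
  by apply/dvdzP; exists (k %/ N%:Z)%Z; rewrite /r; have := divz_eq k N%:Z; lia.
rewrite (wpar_eq2 k prim) -/r; split => [red | w_neq2].
  by apply/eqP => N_odd; apply: (rho_irreducible prim _ _ k_mod) => //; lia.
have [lt|gt|eq] := ltrgtP (2 * r + 1) N%:Z.
- exact: (reducible_lt prim r_ge0 r_ltN k_mod).
- exact: (reducible_gt prim r_ge0 r_ltN k_mod).
- by rewrite eq eqxx in w_neq2.
Qed.
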